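(* Let $D$ be a digraph, let $S\subseteq V(D)$ be a nonempty set of vertices of in-degree $0$ in $D$, and let $T\subseteq V(D)$ with $T\cap S=\emptyset$. If $d^+(v)\ge \Delta^-(D)$ for every $v\in V(D)\setminus T$, then there exist $|S|$ vertex-disjoint directed paths in $D$, each starting in $S$ and ending in $T$.
   Context: $d^+(v)$ is the out-degree of $v$ and $\Delta^-(D)$ is the maximum in-degree of $D$. *)

From mathcomp Require Import all_boot.
Set Implicit Arguments. Unset Strict Implicit. Unset Printing Implicit Defensive.

(* A digraph on a finite vertex type V is a (loopless) arc relation e : rel V;
   e u v means there is an arc u -> v. *)

Definition outdeg (V : finType) (e : rel V) (v : V) : nat := #|[set y | e v y]|.
Definition indeg (V : finType) (e : rel V) (v : V) : nat := #|[set u | e u v]|.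
Definition maxindeg (V : finType) (e : rel V) : nat := \max_(v : V) indeg e v.

(* a directed path x = v0 -> v1 -> ... -> vk (p = [:: v1; ...; vk]),
   with pairwise distinct vertices *)
Definition dipath (V : finType) (e : rel V) (x : V) (p : seq V) : bool :=
  path e x p && uniq (x :: p).

(* Double counting the arcs leaving a set B of vertices outside T gives
   Delta^-(D) |B| <= sum_(v in B) d^+(v) <= Delta^-(D) |N^+(B)|, i.e. Hall's
   condition, so there is an injective f choosing an out-neighbour f v of each
   v outside T.  Follow f from every s in S until T is reached.  Since f is
   injective and maps nothing into S (in-degree 0), two such walks can only
   meet at the same vertex at the same step from the same start; hence each
   walk is a path, so it must reach T, and walks from distinct sources are
   disjoint. *)

From mathcomp Require Import all_boot zify.
Set Implicit Arguments. Unset Strict Implicit. Unset Printing Implicit Defensive.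

Section HallMarriage.

Variable T : finType.
Implicit Types (r : rel T) (A B C N : {set T}) (g : T -> T).

Definition out_nbh r B : {set T} := [set y | [exists x in B, r x y]].

Definition avoiding r N : rel T := [rel x y | r x y && (y \notin N)].

Definition hall_cond r A := forall B, B \subset A -> #|B| <= #|out_nbh r B|.

Definition matching r A g := {in A, forall x, r x (g x)} /\ {in A &, injective g}.

Lemma out_nbhP r B y : reflect (exists2 x, x \in B & r x y) (y \in out_nbh r B).
Proof. by rewrite inE; apply: (iffP exists_inP). Qed.

Lemma out_nbhU r B C : out_nbh r (B :|: C) = out_nbh r B :|: out_nbh r C.
Proof.
apply/setP => y; apply/out_nbhP/setUP => [[x] | [] /out_nbhP[x xB rxy]].
- by case/setUP => [xB | xC] rxy; [left | right]; apply/out_nbhP; exists x.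
- by exists x; rewrite ?inE ?xB.
- by exists x; rewrite ?inE ?xB ?orbT.
Qed.

Lemma out_nbh_avoiding r N B : out_nbh (avoiding r N) B = out_nbh r B :\: N.
Proof.
apply/setP => y; rewrite [RHS]inE andbC.
apply/out_nbhP/andP => [[x xB /andP[rxy yN]] | [/out_nbhP[x xB rxy] yN]].
  by split=> //; apply/out_nbhP; exists x.
by exists x => //; apply/andP.
Qed.

Lemma matching0 r : matching r set0 id.
Proof. by split=> [x | x y]; rewrite inE. Qed.

Lemma matching1 r a b : r a b -> matching r [set a] (fun=> b).
Proof. by move=> rab; split=> [x | x y]; rewrite !inE => /eqP-> // /eqP->. Qed.

Lemma matching_glue r A B N g1 g2 :
    B \subset A -> matching r B g1 -> {in B, forall x, g1 x \in N} ->
    matching (avoiding r N) (A :\: B) g2 ->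
  matching r A (fun x => if x \in B then g1 x else g2 x).
Proof.
move=> sBA [r1 inj1] g1N [r2 inj2].
have g2N x : x \in A -> x \notin B -> (g2 x \notin N) && r x (g2 x).
  by move=> xA xB; rewrite andbC; apply: r2; rewrite inE xB.
split=> [x xA | x y xA yA /=].
  by case: ifPn => [/r1 // | /(g2N x xA)/andP[]].
case: ifPn => [xB | xNB]; case: ifPn => [yB | yNB].
- exact: inj1.
- by move=> E; case/andP: (g2N y yA yNB); rewrite -E g1N.
- by move=> E; case/andP: (g2N x xA xNB); rewrite E g1N.
- by apply: inj2; rewrite inE ?xA ?yA andbT.
Qed.

Lemma hall_condS r A B : hall_cond r A -> B \subset A -> hall_cond r B.
Proof. by move=> hallA sBA C sCB; apply/hallA/(subset_trans sCB). Qed.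

Lemma hall_cond_avoid_tight r A B :
    hall_cond r A -> B \subset A -> #|out_nbh r B| <= #|B| ->
  hall_cond (avoiding r (out_nbh r B)) (A :\: B).
Proof.
move=> hallA sBA tightB C sCAB; rewrite out_nbh_avoiding.
have disjBC : [disjoint B & C].
  by rewrite disjoint_sym disjoints_subset (subset_trans sCAB) ?subsetDr.
have sBCA : B :|: C \subset A by rewrite subUset sBA (subset_trans sCAB) ?subsetDl.
have := hallA _ sBCA; rewrite out_nbhU cardsU (disjoint_setI0 disjBC) cards0.
have := cardsUI (out_nbh r B) (out_nbh r C).
have := cardsID (out_nbh r B) (out_nbh r C); rewrite setIC.
lia.
Qed.

Lemma hall_cond_avoid_point r A a b :
    hall_cond r A -> a \in A ->
    (forall C, C \proper A -> C != set0 -> #|C| < #|out_nbh r C|) ->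
  hall_cond (avoiding r [set b]) (A :\ a).
Proof.
move=> hallA aA loose C sCAa; rewrite out_nbh_avoiding.
have [-> | C0] := eqVneq C set0; first by rewrite cards0.
have pCA : C \proper A.
  rewrite properE (subset_trans sCAa) ?subsetDl //=; apply/subsetPn; exists a => //.
  by apply/negP => /(subsetP sCAa); rewrite !inE eqxx.
have := loose C pCA C0; have := cardsD1 b (out_nbh r C).
case: (b \in _) => /=; lia.
Qed.

Theorem hall_marriage r A : hall_cond r A -> exists g, matching r A g.
Proof.
have [n] := ubnP #|A|; elim: n r A => // n IH r A /ltnSE cardA hallA.
have [-> | [a aA]] := set_0Vmem A; first by exists id; apply: matching0.
case: (boolP [exists B : {set T},
                [&& B \proper A, B != set0 & #|out_nbh r B| <= #|B|]]).
  case/existsP => B /and3P[pBA B0 tightB]; have sBA := proper_sub pBA.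
  have cardB : #|B| < n by have := proper_card pBA; lia.
  have cardAB : #|A :\: B| < n.
    by rewrite cardsDS //; have := card_gt0 B; rewrite B0; lia.
  have [g1 match1] := IH r B cardB (hall_condS hallA sBA).
  have [g2 match2] := IH _ _ cardAB (hall_cond_avoid_tight hallA sBA tightB).
  exists (fun x => if x \in B then g1 x else g2 x).
  apply: matching_glue match2 => // x xB.
  by apply/out_nbhP; exists x => //; apply: match1.1.
rewrite negb_exists => /forallP noTight.
have [b rab] : exists b, r a b.
  have := hallA [set a]; rewrite sub1set aA cards1 card_gt0 => /(_ isT)/set0Pn[b].
  by case/out_nbhP => _ /set1P-> rab; exists b.
have cardAa : #|A :\ a| < n by move: cardA; rewrite (cardsD1 a A) aA.
have looseA C : C \proper A -> C != set0 -> #|C| < #|out_nbh r C|.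
  by move=> pCA C0; have := noTight C; rewrite pCA C0 /= -ltnNge.
have [g2 match2] := IH _ _ cardAa (hall_cond_avoid_point b hallA aA looseA).
exists (fun x => if x \in [set a] then b else g2 x).
apply: matching_glue match2; first by rewrite sub1set.
  exact: matching1.
by move=> x _; apply: set11.
Qed.

End HallMarriage.

Section Digraph.

Variables (V : finType) (e : rel V).

Lemma indeg0_no_arc s u : indeg e s = 0 -> ~~ e u s.
Proof. by move/eqP; rewrite cards_eq0 => /eqP/setP/(_ u); rewrite !inE => ->. Qed.

Lemma sum_outdeg_le (B : {set V}) :
  \sum_(x in B) outdeg e x <= #|out_nbh e B| * maxindeg e.
Proof.
rewrite /outdeg; under eq_bigr => x _ do rewrite -sum1dep_card.
rewrite (exchange_big_dep (mem (out_nbh e B))) => [|x y xB exy]; last first.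
  by apply/out_nbhP; exists x.
rewrite -sum_nat_const; apply: leq_sum => y _; rewrite sum1dep_card.
apply: leq_trans (leq_bigmax y); apply: subset_leq_card.
by apply/subsetP => x; rewrite !inE => /andP[].
Qed.

Lemma hall_cond_outdeg (A : {set V}) :
  0 < maxindeg e -> {in A, forall v, maxindeg e <= outdeg e v} -> hall_cond e A.
Proof.
move=> maxindeg_gt0 degA B sBA; rewrite -(leq_pmul2r maxindeg_gt0).
apply: leq_trans (sum_outdeg_le B); rewrite -sum_nat_const.
by apply: leq_sum => x xB; apply/degA/(subsetP sBA).
Qed.

End Digraph.

Section Iterates.

Variables (T : finType) (f : T -> T) (D S : {set T}).
Hypotheses (f_inj : {in D &, injective f}) (f_notin_S : {in D, forall x, f x \notin S}).

Definition stays_in s n := forall k, k < n -> iter k f s \in D.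

Lemma stays_inW s m n : m <= n -> stays_in s n -> stays_in s m.
Proof. by move=> mn sn k km; apply/sn/(leq_trans km). Qed.

Lemma iter_stays_inj i j s s' :
    s \in S -> s' \in S -> stays_in s i -> stays_in s' j ->
  iter i f s = iter j f s' -> i = j /\ s = s'.
Proof.
move=> sS s'S; elim: i j => [|i IH] [|j] si s'j //=.
- by move=> E; have := f_notin_S (s'j j (ltnSn j)); rewrite -E sS.
- by move=> E; have := f_notin_S (si i (ltnSn i)); rewrite E s'S.
move=> /f_inj E; have [-> ->] // : i = j /\ s = s'.
apply: IH (stays_inW (leqnSn i) si) (stays_inW (leqnSn j) s'j) _.
by apply: E; [apply: si | apply: s'j].
Qed.

Lemma exit_time s : s \in S -> exists n, stays_in s n /\ iter n f s \notin D.
Proof.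
move=> sS; have [n nD] : exists n, iter n f s \notin D.
  case: (boolP [forall k : 'I_#|T|.+1, iter k f s \in D]); last first.
    by case/forallPn => k; exists k.
  move/forallP => allD.
  suff : #|'I_#|T|.+1| <= #|T| by rewrite card_ord ltnn.
  apply: (leq_card (fun k : 'I_#|T|.+1 => iter k f s)) => k1 k2 E; apply: val_inj.
  by case: (iter_stays_inj sS sS _ _ E) => // [|] k kk;
    apply: (allD (Ordinal (ltn_trans kk (ltn_ord _)))).
have [m mD minm] := ex_minnP (ex_intro (fun n => iter n f s \notin D) n nD).
exists m; split=> // k km.
by apply/negPn/negP => /minm; rewrite leqNgt km.
Qed.

Lemma path_traject_stays (r : rel T) s n :
  {in D, forall x, r x (f x)} -> stays_in s n -> path r s (traject f (f s) n).
Proof.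
elim: n s => //= n IH s rf sn; rewrite rf ?(sn 0) //=.
by apply: IH rf _ => k kn; rewrite -iterSr; apply: sn.
Qed.

Lemma traject_stays_uniq s n : s \in S -> stays_in s n -> uniq (traject f s n.+1).
Proof.
move=> sS sn; rewrite looping_uniq; apply/negP => /trajectP[k kn E].
have [nk _] := iter_stays_inj sS sS sn (stays_inW (ltnW kn) sn) E.
by rewrite nk ltnn in kn.
Qed.

Lemma traject_stays_disjoint s s' n m :
    s \in S -> s' \in S -> s != s' -> stays_in s n -> stays_in s' m ->
  [disjoint traject f s n.+1 & traject f s' m.+1].
Proof.
move=> sS s'S neq_ss' sn s'm; apply/pred0P => x.
apply/negbTE/negP => /andP[/trajectP[a an ->] /trajectP[b bm E]].
have [_ eq_ss'] :=
  iter_stays_inj sS s'S (stays_inW (ltnSE an) sn) (stays_inW (ltnSE bm) s'm) E.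
by rewrite eq_ss' eqxx in neq_ss'.
Qed.

End Iterates.

Theorem lemma22 (V : finType) (e : rel V) (Hloopless : irreflexive e)
    (S T : {set V}) (HS0 : S != set0)
    (HSin : forall s, s \in S -> indeg e s = 0)
    (HST : [disjoint S & T])
    (Hdeg : forall v, v \notin T -> maxindeg e <= outdeg e v)
    (Harc : 0 < maxindeg e) :
  exists P : 'I_#|S| -> V * seq V,
    (forall i, [/\ dipath e (P i).1 (P i).2, (P i).1 \in S
                 & last (P i).1 (P i).2 \in T]) /\
    (forall i j, i != j ->
       [disjoint ((P i).1 :: (P i).2) & ((P j).1 :: (P j).2)]).
Proof.
have hallT : hall_cond e (~: T).
  by apply: hall_cond_outdeg => // v; rewrite inE; apply: Hdeg.
have [f [f_arc f_inj]] := hall_marriage hallT.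
have f_notin_S : {in ~: T, forall x, f x \notin S}.
  by move=> x /f_arc; apply: contraL => /HSin/indeg0_no_arc.
have [n hn] := fin_all_exists (fun i : 'I_#|S| =>
  exit_time f_inj f_notin_S (enum_valP i)).
exists (fun i => (enum_val i, traject f (f (enum_val i)) (n i))).
split=> [i | i j neq_ij] /=.
  have [stays exit] := hn i; split; last 2 first.
  - exact: enum_valP.
  - by rewrite last_traject; move: exit; rewrite inE negbK.
  by rewrite /dipath (path_traject_stays f_arc stays) -trajectS
    (traject_stays_uniq f_inj f_notin_S (enum_valP i) stays).
have neq_ij' : enum_val i != enum_val j by rewrite (inj_eq enum_val_inj).
exact (traject_stays_disjoint f_inj f_notin_S (enum_valP i) (enum_valP j)
  neq_ij' (hn i).1 (hn j).1).
Qed.
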